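(* Consider the system of ordinary differential equations for $(x(t),h(t),n(t))$: \[ \frac{dx}{dt} = x(1-x)S(h) + \mu(h)(1-x) - \nu x,\qquad \frac{dh}{dt} = \alpha n(1+\beta x)\,G(h) - \Gamma(n)(h-1),\qquad \frac{dn}{dt} = r n(1-n) - D(h,x)\,n, \] where \[ S(h) = \frac{s_0}{1+e^{-\lambda(h-h_c)}} - c + \varphi\, d_S(h),\quad d_S(h) = \frac{d_{\max} h^m}{h_{50}^m + h^m},\quad \mu(h)=\mu_0 h^p, \] \[ G(h) = \frac{K_g}{K_g+h},\quad \Gamma(n) = \frac{\gamma_0}{1+\eta n},\quad D(h,x) = (1-\varphi x)\,d_S(h), \] and all parameters $s_0,\lambda,h_c,c,\varphi,d_{\max},h_{50},m,\mu_0,p,\nu,\alpha,\beta,K_g,\gamma_0,\eta,r$ are positive, with $\varphi\le 1$. Let $\mathcal{D} = [0,1]\times(0,\infty)\times[0,1]$. Then for every initial condition $(x_0,h_0,n_0)\in\mathcal{D}$ the system admits a unique solution $(x(t),h(t),n(t))$ defined for all $t\ge 0$, and this solution remains in $\mathcal{D}$ for all $t\ge 0$.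
   Context: The model describes a tumor: $x$ is the fraction of acid-resistant cells, $h$ is the proton concentration normalized by its physiological value (so $h=1$ is physiological pH), and $n$ is tumor density normalized by carrying capacity. *)

From Stdlib Require Import Reals.
Open Scope R_scope.

Record params := Params {
  s0 : R; lam : R; hc : R; c : R; phi : R; dmax : R; h50 : R; m : R;
  mu0 : R; p : R; nu : R; alpha : R; beta : R; Kg : R; gamma0 : R;
  eta : R; r : R }.

Definition params_ok (P : params) : Prop :=
  0 < s0 P /\ 0 < lam P /\ 0 < hc P /\ 0 < c P /\ 0 < phi P /\ phi P <= 1 /\
  0 < dmax P /\ 0 < h50 P /\ 0 < m P /\ 0 < mu0 P /\ 0 < p P /\ 0 < nu P /\
  0 < alpha P /\ 0 < beta P /\ 0 < Kg P /\ 0 < gamma0 P /\ 0 < eta P /\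
  0 < r P.

(* h^m for real exponent, h > 0: Rpower h m = exp (m ln h). *)
Definition dS (P : params) (h : R) : R :=
  dmax P * Rpower h (m P) / (Rpower (h50 P) (m P) + Rpower h (m P)).
Definition Sfun (P : params) (h : R) : R :=
  s0 P / (1 + exp (- (lam P * (h - hc P)))) - c P + phi P * dS P h.
Definition mu (P : params) (h : R) : R := mu0 P * Rpower h (p P).
Definition Gfun (P : params) (h : R) : R := Kg P / (Kg P + h).
Definition Gam (P : params) (n : R) : R := gamma0 P / (1 + eta P * n).
Definition Dfun (P : params) (h x : R) : R := (1 - phi P * x) * dS P h.

Definition Fx (P : params) (x h n : R) : R :=
  x * (1 - x) * Sfun P h + mu P h * (1 - x) - nu P * x.
Definition Fh (P : params) (x h n : R) : R :=
  alpha P * n * (1 + beta P * x) * Gfun P h - Gam P n * (h - 1).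
Definition Fn (P : params) (x h n : R) : R :=
  r P * n * (1 - n) - Dfun P h x * n.

Definition right_cont0 (f : R -> R) : Prop :=
  forall eps, 0 < eps -> exists delta, 0 < delta /\
    forall t, 0 <= t < delta -> Rabs (f t - f 0) < eps.

(* A (classical) solution on [0, +oo): continuous on [0,oo), differentiable on
   (0,oo) satisfying the ODE there, with h > 0 (the natural domain of the
   vector field, since h^p, h^m with real exponents need h > 0). *)
Definition is_solution (P : params) (x h n : R -> R) : Prop :=
  (forall t, 0 <= t -> 0 < h t) /\
  right_cont0 x /\ right_cont0 h /\ right_cont0 n /\
  (forall t, 0 < t ->
     derivable_pt_lim x t (Fx P (x t) (h t) (n t)) /\
     derivable_pt_lim h t (Fh P (x t) (h t) (n t)) /\
     derivable_pt_lim n t (Fn P (x t) (h t) (n t))).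

Definition inD (x h n : R) : Prop := 0 <= x <= 1 /\ 0 < h /\ 0 <= n <= 1.

(* Clamp the vector field to the box [0,1] x [a,b] x [0,1], with a = min(h0,1) > 0 and
   b = max(h0, h_max).  There the field is Lipschitz (h^m and h^p are smooth for h >= a), so
   Picard iteration yields a global solution of the clamped system.  On every face of the box
   the field points inward, so a barrier argument keeps that solution in the box, where the
   clamp does nothing.  Any other solution coincides with it: the field is still Lipschitz on a
   neighbourhood of the box, and a Gronwall estimate on the squared distance shows that the
   other solution can never leave that neighbourhood. *)

From Pilot Require Import Defs.
From Stdlib Require Import Reals Lra Psatz List.
From Coquelicot Require Import Coquelicot.
Open Scope R_scope.

Definition lipschitz (f : R -> R) (L : R) : Prop :=
  forall s t, Rabs (f t - f s) <= L * Rabs (t - s).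

Lemma lipschitz_dist_lt f L s t eps : lipschitz f L -> 0 < eps ->
  Rabs (t - s) < eps / (Rabs L + 1) -> Rabs (f t - f s) < eps.
Proof.
  intros Hf Heps Hts.
  assert (HL : 0 < Rabs L + 1) by (pose proof (Rabs_pos L); lra).
  assert (L * Rabs (t - s) <= Rabs L * Rabs (t - s))
    by (apply Rmult_le_compat_r; [apply Rabs_pos | apply RRle_abs]).
  assert (Rabs L * Rabs (t - s) <= Rabs L * (eps / (Rabs L + 1)))
    by (apply Rmult_le_compat_l; [apply Rabs_pos | lra]).
  assert (Rabs L * (eps / (Rabs L + 1)) < eps).
  { apply Rmult_lt_reg_r with (Rabs L + 1); [lra |].
    field_simplify; [nra | lra]. }
  specialize (Hf s t). lra.
Qed.

Lemma lipschitz_continuity_pt f L x : lipschitz f L -> continuity_pt f x.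
Proof.
  intros Hf eps Heps. exists (eps / (Rabs L + 1)). split.
  - apply Rdiv_lt_0_compat; [lra | pose proof (Rabs_pos L); lra].
  - intros y [_ Hy]. simpl in *. unfold R_dist in *. now apply (lipschitz_dist_lt f L).
Qed.

Lemma lipschitz_continuous f L x : lipschitz f L -> continuous f x.
Proof. intros Hf. apply continuity_pt_filterlim. now apply (lipschitz_continuity_pt f L). Qed.

Lemma right_cont0_continuity_pt f :
  right_cont0 f <-> continuity_pt (fun t => f (Rmax 0 t)) 0.
Proof.
  split.
  - intros Hf eps Heps. destruct (Hf eps Heps) as [d [Hd Hfd]]. exists d. split; [lra |].
    intros t [_ Ht]. simpl in *. unfold R_dist in *.
    rewrite (Rmax_left 0 0) by lra. rewrite Rminus_0_r in Ht.
    destruct (Rle_dec 0 t).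
    + rewrite Rmax_right by lra. apply Hfd. rewrite Rabs_right in Ht; lra.
    + rewrite Rmax_left, Rminus_diag, Rabs_R0 by lra. lra.
  - intros Hf eps Heps. destruct (Hf eps Heps) as [d [Hd Hfd]]. exists d. split; [lra |].
    intros t Ht. destruct (Req_dec t 0) as [-> | Hn].
    + rewrite Rminus_diag, Rabs_R0. lra.
    + specialize (Hfd t). simpl in Hfd. unfold R_dist in Hfd.
      rewrite (Rmax_left 0 0), Rmax_right in Hfd by lra.
      apply Hfd. split; [split; [exact I | congruence] |].
      rewrite Rminus_0_r, Rabs_right; lra.
Qed.

Lemma continuity_pt_right_cont0 f : continuity_pt f 0 -> right_cont0 f.
Proof.
  intros Hf. apply right_cont0_continuity_pt.
  apply (continuity_pt_comp (Rmax 0) f); [| now rewrite Rmax_left by lra].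
  apply (lipschitz_continuity_pt _ 1). intros s t.
  unfold Rmax. destruct (Rle_dec 0 t), (Rle_dec 0 s); apply Rabs_le;
    unfold Rabs; destruct (Rcase_abs (t - s)); lra.
Qed.

Lemma lipschitz_right_cont0 f L : lipschitz f L -> right_cont0 f.
Proof. intros Hf. now apply continuity_pt_right_cont0, (lipschitz_continuity_pt f L). Qed.

Lemma right_cont0_const c : right_cont0 (fun _ => c).
Proof. apply continuity_pt_right_cont0, continuity_pt_const. now intros ? ?. Qed.

Lemma right_cont0_plus f g :
  right_cont0 f -> right_cont0 g -> right_cont0 (fun t => f t + g t).
Proof. rewrite !right_cont0_continuity_pt. apply continuity_pt_plus. Qed.

Lemma right_cont0_minus f g :
  right_cont0 f -> right_cont0 g -> right_cont0 (fun t => f t - g t).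
Proof. rewrite !right_cont0_continuity_pt. apply continuity_pt_minus. Qed.

Lemma right_cont0_mult f g :
  right_cont0 f -> right_cont0 g -> right_cont0 (fun t => f t * g t).
Proof. rewrite !right_cont0_continuity_pt. apply continuity_pt_mult. Qed.

Lemma right_cont0_comp q f :
  right_cont0 f -> continuity_pt q (f 0) -> right_cont0 (fun t => q (f t)).
Proof.
  rewrite !right_cont0_continuity_pt. intros Hf Hq.
  apply (continuity_pt_comp (fun t => f (Rmax 0 t)) q); [exact Hf |].
  now rewrite Rmax_left by lra.
Qed.

Lemma le_initial_of_deriv_nonpos g dg T : 0 <= T -> right_cont0 g ->
  (forall t, 0 < t -> derivable_pt_lim g t (dg t)) ->
  (forall t, 0 < t <= T -> dg t <= 0) -> g T <= g 0.
Proof.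
  intros HT Hrc Hd Hneg.
  destruct (Rle_dec (g T) (g 0)) as [| Hc]; [assumption | exfalso].
  assert (HT0 : 0 < T) by (destruct HT as [| <-]; [assumption | lra]).
  destruct (Hrc (g T - g 0)) as [d [Hd0 Hdd]]; [lra |].
  set (e := Rmin (d / 2) (T / 2)).
  assert (He : 0 < e /\ e < d /\ e < T).
  { assert (e <= d / 2 /\ e <= T / 2) by (split; [apply Rmin_l | apply Rmin_r]).
    split; [apply Rmin_pos |]; lra. }
  destruct (MVT_gen g e T dg) as [c [Hc1 Hc2]];
    rewrite Rmin_left, Rmax_right in * by lra.
  - intros x Hx. apply is_derive_Reals, Hd. lra.
  - intros x Hx. apply derivable_continuous_pt. exists (dg x). apply Hd. lra.
  - assert (dg c * (T - e) <= 0) by (apply Rmult_le_0_r; [apply Hneg |]; lra).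
    specialize (Hdd e ltac:(lra)). apply Rabs_def2 in Hdd. lra.
Qed.

Lemma derivable_pt_lim_quadratic_remainder q dq K u :
  (forall h, Rabs (q (u + h) - q u - dq * h) <= K * (h * h)) -> derivable_pt_lim q u dq.
Proof.
  intros Hq eps Heps.
  assert (HK : 0 < Rabs K + 1) by (pose proof (Rabs_pos K); lra).
  exists (mkposreal (eps / (Rabs K + 1)) (Rdiv_lt_0_compat _ _ Heps HK)).
  intros h Hh0 Hh. simpl in Hh.
  replace ((q (u + h) - q u) / h - dq) with ((q (u + h) - q u - dq * h) / h) by (field; auto).
  assert (Hhp : 0 < Rabs h) by (apply Rabs_pos_lt; auto).
  unfold Rdiv. rewrite Rabs_mult, Rabs_inv.
  apply Rmult_lt_reg_r with (Rabs h); [assumption |].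
  rewrite Rmult_assoc, Rinv_l, Rmult_1_r by lra.
  assert (K * (h * h) <= Rabs K * (Rabs h * Rabs h)).
  { rewrite <- Rabs_mult, (Rabs_right (h * h)) by nra.
    apply Rmult_le_compat_r; [nra | apply RRle_abs]. }
  assert (Rabs K * Rabs h < eps).
  { apply Rle_lt_trans with (Rabs K * (eps / (Rabs K + 1))).
    - apply Rmult_le_compat_l; [apply Rabs_pos | lra].
    - apply Rmult_lt_reg_r with (Rabs K + 1); [lra |]. field_simplify; [nra | lra]. }
  specialize (Hq h). nra.
Qed.

Definition sq_neg_part (u : R) : R := Rmin u 0 * Rmin u 0.

Lemma derivable_pt_lim_sq_neg_part u : derivable_pt_lim sq_neg_part u (2 * Rmin u 0).
Proof.
  apply derivable_pt_lim_quadratic_remainder with (K := 1). intros h.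
  unfold sq_neg_part, Rmin. destruct (Rle_dec (u + h) 0), (Rle_dec u 0);
    apply Rabs_le; split; nra.
Qed.

Lemma lower_bound_preserved y dy lo : right_cont0 y -> lo <= y 0 ->
  (forall t, 0 < t -> derivable_pt_lim y t (dy t)) ->
  (forall t, 0 < t -> y t < lo -> 0 <= dy t) ->
  forall t, 0 <= t -> lo <= y t.
Proof.
  intros Hrc H0 Hd Hin t Ht.
  assert (Hle : sq_neg_part (y t - lo) <= sq_neg_part (y 0 - lo)).
  { apply (le_initial_of_deriv_nonpos (fun s => sq_neg_part (y s - lo))
             (fun s => 2 * Rmin (y s - lo) 0 * dy s) t Ht).
    - apply right_cont0_comp.
      + apply right_cont0_minus; [exact Hrc | apply right_cont0_const].
      + apply derivable_continuous_pt. eexists. apply derivable_pt_lim_sq_neg_part.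
    - intros s Hs. apply (derivable_pt_lim_comp (fun s => y s - lo)).
      + rewrite <- (Rminus_0_r (dy s)).
        apply derivable_pt_lim_minus; [now apply Hd | apply derivable_pt_lim_const].
      + apply derivable_pt_lim_sq_neg_part.
    - intros s [Hs _]. unfold Rmin. destruct (Rle_dec (y s - lo) 0); [| lra].
      destruct (Req_dec (y s - lo) 0) as [E | E]; [rewrite E; lra |].
      assert (0 <= dy s) by (apply Hin; lra). nra. }
  unfold sq_neg_part in Hle. rewrite (Rmin_right (y 0 - lo)) in Hle by lra.
  destruct (Rle_dec lo (y t)) as [| Hlt]; [assumption |].
  rewrite Rmin_left in Hle by lra. nra.
Qed.

Lemma upper_bound_preserved y dy hi : right_cont0 y -> y 0 <= hi ->
  (forall t, 0 < t -> derivable_pt_lim y t (dy t)) ->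
  (forall t, 0 < t -> hi < y t -> dy t <= 0) ->
  forall t, 0 <= t -> y t <= hi.
Proof.
  intros Hrc H0 Hd Hin t Ht.
  enough (- hi <= - y t) by lra.
  apply (lower_bound_preserved (fun s => - y s) (fun s => - dy s) (- hi)); [| lra | | | exact Ht].
  - intros e He. destruct (Hrc e He) as [d [Hd0 Hdd]]. exists d. split; [exact Hd0 |].
    intros s Hs. replace (- y s - - y 0) with (- (y s - y 0)) by ring.
    rewrite Rabs_Ropp. now apply Hdd.
  - intros s Hs. apply (derivable_pt_lim_opp y). now apply Hd.
  - intros s Hs Hlt. assert (dy s <= 0) by (apply Hin; lra). lra.
Qed.

(* Increasing below [rho] and constant above, so along a function [W] its decrease only needs
   [W' <= 0] where [W < rho]. *)
Definition soft_cap (rho u : R) : R := 2 * rho * Rmin u rho - Rmin u rho * Rmin u rho.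

Lemma derivable_pt_lim_soft_cap rho u :
  derivable_pt_lim (soft_cap rho) u (2 * Rmax (rho - u) 0).
Proof.
  apply derivable_pt_lim_quadratic_remainder with (K := 1). intros h.
  unfold soft_cap, Rmin, Rmax.
  destruct (Rle_dec (u + h) rho), (Rle_dec u rho), (Rle_dec (rho - u) 0);
    apply Rabs_le; split; nra.
Qed.

Lemma eq0_of_deriv_nonpos_below W dW rho T : 0 < rho -> 0 <= T ->
  right_cont0 W -> W 0 = 0 -> 0 <= W T ->
  (forall t, 0 < t -> derivable_pt_lim W t (dW t)) ->
  (forall t, 0 < t <= T -> W t < rho -> dW t <= 0) -> W T = 0.
Proof.
  intros Hrho HT Hrc HW0 HWT Hd Hneg.
  assert (Hle : soft_cap rho (W T) <= soft_cap rho (W 0)).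
  { apply (le_initial_of_deriv_nonpos (fun t => soft_cap rho (W t))
             (fun t => 2 * Rmax (rho - W t) 0 * dW t) T HT).
    - apply right_cont0_comp; [exact Hrc |].
      apply derivable_continuous_pt. eexists. apply derivable_pt_lim_soft_cap.
    - intros t Ht. apply (derivable_pt_lim_comp W);
        [now apply Hd | apply derivable_pt_lim_soft_cap].
    - intros t Ht. unfold Rmax. destruct (Rle_dec (rho - W t) 0); [lra |].
      assert (dW t <= 0) by (apply Hneg; lra). nra. }
  rewrite HW0 in Hle. unfold soft_cap, Rmin in Hle.
  destruct (Rle_dec 0 rho), (Rle_dec (W T) rho); nra.
Qed.

Section ListSums.
Context {I : Type}.

Definition lsum (l : list I) (f : I -> R) : R := fold_right (fun i acc => f i + acc) 0 l.

Lemma lsum_cons j l f : lsum (j :: l) f = f j + lsum l f.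
Proof. reflexivity. Qed.

Lemma lsum_le l f g : (forall i, In i l -> f i <= g i) -> lsum l f <= lsum l g.
Proof.
  induction l as [| j l IH]; intros Hfg; [simpl; lra |]. rewrite !lsum_cons.
  assert (f j <= g j) by (apply Hfg; now left).
  assert (lsum l f <= lsum l g) by (apply IH; intros i Hi; apply Hfg; now right).
  lra.
Qed.

Lemma lsum_const l c : lsum l (fun _ => c) = INR (length l) * c.
Proof.
  induction l as [| j l IH]; [simpl; ring |].
  rewrite lsum_cons, IH. change (length (j :: l)) with (S (length l)). rewrite S_INR. ring.
Qed.

Lemma lsum_scal l c f : lsum l (fun i => c * f i) = c * lsum l f.
Proof. induction l as [| j l IH]; [simpl; ring |]. rewrite !lsum_cons, IH. ring. Qed.

Lemma lsum_nonneg l f : (forall i, 0 <= f i) -> 0 <= lsum l f.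
Proof.
  intros Hf. induction l as [| j l IH]; [simpl; lra |].
  rewrite lsum_cons. specialize (Hf j). lra.
Qed.

Lemma le_lsum_term l f i : (forall j, 0 <= f j) -> In i l -> f i <= lsum l f.
Proof.
  intros Hf. induction l as [| j l IH]; intros Hi; [destruct Hi |].
  pose proof (lsum_nonneg l f Hf). rewrite lsum_cons. destruct Hi as [<- | Hi].
  - lra.
  - specialize (IH Hi). specialize (Hf j). lra.
Qed.

Lemma derivable_pt_lim_lsum l (f : I -> R -> R) df t :
  (forall i, derivable_pt_lim (f i) t (df i)) ->
  derivable_pt_lim (fun s => lsum l (fun i => f i s)) t (lsum l df).
Proof.
  intros Hf. induction l as [| j l IH]; simpl.
  - apply derivable_pt_lim_const.
  - now apply (derivable_pt_lim_plus (f j)).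
Qed.

Lemma right_cont0_lsum l (f : I -> R -> R) :
  (forall i, right_cont0 (f i)) -> right_cont0 (fun s => lsum l (fun i => f i s)).
Proof.
  intros Hf. induction l as [| j l IH]; simpl.
  - apply right_cont0_const.
  - now apply right_cont0_plus.
Qed.

Lemma lsum_abs_sqr_le l a :
  lsum l (fun i => Rabs (a i)) * lsum l (fun i => Rabs (a i))
  <= INR (length l) * lsum l (fun i => a i * a i).
Proof.
  induction l as [| j l IH]; [simpl; lra |].
  rewrite !lsum_cons. change (length (j :: l)) with (S (length l)).
  rewrite S_INR.
  set (Sa := lsum l (fun i => Rabs (a i))) in *. set (Qa := lsum l (fun i => a i * a i)) in *.
  set (n := INR (length l)) in *.
  assert (Hn : 0 <= n) by apply pos_INR.
  assert (HS : 0 <= Sa) by (apply lsum_nonneg; intros; apply Rabs_pos).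
  assert (Ha : Rabs (a j) * Rabs (a j) = a j * a j)
    by (rewrite <- Rabs_mult; apply Rabs_right; nra).
  assert (Hj : 0 <= Rabs (a j)) by apply Rabs_pos.
  assert (HQ : 0 <= Qa) by (apply lsum_nonneg; intros; nra).
  (* [2 |a j| Sa <= n (a j)^2 + Sa^2 / n] and [Sa^2 <= n Qa]. *)
  destruct (Req_dec n 0) as [Hn0 | Hn0].
  - assert (HSa : Sa = 0) by nra. rewrite Hn0, HSa. nra.
  - assert (0 <= (n * Rabs (a j) - Sa) * (n * Rabs (a j) - Sa)) by apply Rle_0_sqr.
    assert (Hprod : n * (2 * Rabs (a j) * Sa) <= n * (n * (a j * a j) + Qa))
      by (rewrite <- Ha; nra).
    assert (2 * Rabs (a j) * Sa <= n * (a j * a j) + Qa)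
      by (apply Rmult_le_reg_l with n; [lra | exact Hprod]).
    nra.
Qed.

End ListSums.

Lemma exp_le_compat a b : a <= b -> exp a <= exp b.
Proof. intros [H | <-]; [left; now apply exp_increasing | lra]. Qed.

Lemma small_over_pow2 K eps : 0 < eps -> exists k, K / 2 ^ k < eps.
Proof.
  intros Heps.
  destruct (pow_lt_1_zero (/ 2) ltac:(rewrite Rabs_right; lra) (eps / (Rabs K + 1)))
    as [k Hk].
  { apply Rdiv_lt_0_compat; [lra | pose proof (Rabs_pos K); lra]. }
  exists k. specialize (Hk k (Nat.le_refl k)).
  rewrite pow_inv, Rabs_right in Hk by (left; apply Rinv_0_lt_compat, pow_lt; lra).
  assert (Hp : 0 < / 2 ^ k) by (apply Rinv_0_lt_compat, pow_lt; lra).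
  assert (HK : 0 < Rabs K + 1) by (pose proof (Rabs_pos K); lra).
  assert (H2k : 2 ^ k <> 0) by (apply pow_nonzero; lra).
  assert (K * / 2 ^ k <= Rabs K * / 2 ^ k) by (apply Rmult_le_compat_r; [lra | apply RRle_abs]).
  assert ((Rabs K + 1) * / 2 ^ k < eps).
  { apply Rmult_lt_reg_r with (/ (Rabs K + 1)); [now apply Rinv_0_lt_compat |].
    replace ((Rabs K + 1) * / 2 ^ k * / (Rabs K + 1)) with (/ 2 ^ k)
      by (field; split; [lra | exact H2k]).
    exact Hk. }
  unfold Rdiv. lra.
Qed.

Lemma eq0_of_le_over_pow2 a K : (forall k, Rabs a <= K / 2 ^ k) -> a = 0.
Proof.
  intros H. destruct (Req_dec a 0) as [| Ha]; [assumption | exfalso].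
  destruct (small_over_pow2 K (Rabs a)) as [k Hk]; [now apply Rabs_pos_lt |].
  specialize (H k). lra.
Qed.

Lemma is_lim_seq_dist_le u (a c B : R) k : is_lim_seq u a ->
  (forall j, (k <= j)%nat -> Rabs (u j - c) <= B) -> Rabs (a - c) <= B.
Proof.
  intros Hl Hb. destruct (Rle_dec (Rabs (a - c)) B) as [| Hn]; [assumption | exfalso].
  apply is_lim_seq_spec in Hl.
  destruct (Hl (mkposreal (Rabs (a - c) - B) ltac:(lra))) as [N HN]. simpl in HN.
  specialize (HN (max N k) (Nat.le_max_l _ _)). specialize (Hb (max N k) (Nat.le_max_r _ _)).
  assert (Rabs (a - c) <= Rabs (u (max N k) - a) + Rabs (u (max N k) - c)).
  { replace (a - c) with (- (u (max N k) - a) + (u (max N k) - c)) by ring.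
    rewrite <- (Rabs_Ropp (u (max N k) - a)). apply Rabs_triang. }
  lra.
Qed.

Lemma ex_RInt_lipschitz f L a b : lipschitz f L -> ex_RInt f a b.
Proof.
  intros Hf. apply (@ex_RInt_continuous R_CompleteNormedModule).
  intros z _. now apply (lipschitz_continuous f L).
Qed.

Lemma RInt_lipschitz f L B : lipschitz f L -> (forall s, Rabs (f s) <= B) ->
  lipschitz (fun t => RInt f 0 t) B.
Proof.
  intros Hf Hb s t.
  assert (Hchasles : RInt f 0 s + RInt f s t = RInt f 0 t)
    by exact (RInt_Chasles f 0 s t (ex_RInt_lipschitz f L 0 s Hf) (ex_RInt_lipschitz f L s t Hf)).
  replace (RInt f 0 t - RInt f 0 s) with (RInt f s t) by lra.
  rewrite Rmult_comm.
  exact (norm_RInt_le_const_abs f s t (RInt f s t) B (fun x _ => Hb x)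
           (RInt_correct f s t (ex_RInt_lipschitz f L s t Hf))).
Qed.

Lemma RInt_dist_le f g h t : 0 <= t ->
  ex_RInt f 0 t -> ex_RInt g 0 t -> ex_RInt h 0 t ->
  (forall s, 0 <= s <= t -> Rabs (f s - g s) <= h s) ->
  Rabs (RInt f 0 t - RInt g 0 t) <= RInt h 0 t.
Proof.
  intros Ht Ef Eg Eh Hb.
  assert (RInt f 0 t <= RInt (fun s => g s + h s) 0 t).
  { apply RInt_le; [lra | assumption | now apply (ex_RInt_plus g h) |].
    intros s Hs. specialize (Hb s ltac:(lra)). apply Rabs_le_between in Hb. lra. }
  assert (RInt g 0 t <= RInt (fun s => f s + h s) 0 t).
  { apply RInt_le; [lra | assumption | now apply (ex_RInt_plus f h) |].
    intros s Hs. specialize (Hb s ltac:(lra)). apply Rabs_le_between in Hb. lra. }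
  assert (RInt (fun s => g s + h s) 0 t = RInt g 0 t + RInt h 0 t)
    by exact (RInt_plus g h 0 t Eg Eh).
  assert (RInt (fun s => f s + h s) 0 t = RInt f 0 t + RInt h 0 t)
    by exact (RInt_plus f h 0 t Ef Eh).
  apply Rabs_le. lra.
Qed.

Lemma is_derive_exp_scaled A k t :
  is_derive (fun s => A * exp (k * s)) t (A * (k * exp (k * t))).
Proof. auto_derive; [exact I | ring]. Qed.

Lemma RInt_exp_scaled A k t : 0 < k ->
  RInt (fun s => A * exp (k * s)) 0 t = A * (exp (k * t) - 1) / k.
Proof.
  intros Hk. apply is_RInt_unique.
  replace (A * (exp (k * t) - 1) / k) with (minus (A * exp (k * t) / k) (A * exp (k * 0) / k))
    by (rewrite Rmult_0_r, exp_0; unfold minus, plus, opp; simpl; field; lra).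
  apply (is_RInt_derive (fun s => A * exp (k * s) / k)).
  - intros x _. auto_derive; [exact I | field; lra].
  - intros x _. apply continuity_pt_filterlim, derivable_continuous_pt.
    eexists. apply is_derive_Reals, is_derive_exp_scaled.
Qed.

Definition clampR (lo hi v : R) : R := Rmax lo (Rmin hi v).

Lemma clampR_in lo hi v : lo <= hi -> lo <= clampR lo hi v <= hi.
Proof. intros. unfold clampR, Rmax, Rmin. destruct (Rle_dec hi v), (Rle_dec lo _); lra. Qed.

Lemma clampR_id lo hi v : lo <= v <= hi -> clampR lo hi v = v.
Proof. intros. unfold clampR, Rmax, Rmin. destruct (Rle_dec hi v), (Rle_dec lo _); lra. Qed.

Lemma clampR_below lo hi v : lo <= hi -> v < lo -> clampR lo hi v = lo.
Proof. intros. unfold clampR, Rmax, Rmin. destruct (Rle_dec hi v), (Rle_dec lo _); lra. Qed.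

Lemma clampR_above lo hi v : lo <= hi -> hi < v -> clampR lo hi v = hi.
Proof. intros. unfold clampR, Rmax, Rmin. destruct (Rle_dec hi v), (Rle_dec lo _); lra. Qed.

Lemma clampR_dist_le lo hi u v : Rabs (clampR lo hi u - clampR lo hi v) <= Rabs (u - v).
Proof.
  unfold clampR, Rmax, Rmin.
  destruct (Rle_dec hi u), (Rle_dec hi v); repeat destruct (Rle_dec lo _);
    unfold Rabs; repeat destruct (Rcase_abs _); lra.
Qed.

Lemma exp_dist_le u v B : Rabs u <= B -> Rabs v <= B ->
  Rabs (exp u - exp v) <= exp B * Rabs (u - v).
Proof.
  intros Hu Hv. apply Rabs_le_between in Hu, Hv.
  assert (Hkey : forall a b, a <= b <= B -> exp b - exp a <= exp B * (b - a)).
  { intros a b [Hab HbB]. pose proof (exp_ineq1_le (a - b)).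
    assert (exp a = exp b * exp (a - b)) by (rewrite <- exp_plus; f_equal; ring).
    pose proof (exp_le_compat b B HbB). pose proof (exp_pos b). nra. }
  destruct (Rle_dec u v).
  - pose proof (Hkey u v ltac:(lra)). pose proof (exp_le_compat u v r).
    rewrite Rabs_left1, (Rabs_left1 (u - v)) by lra. lra.
  - pose proof (Hkey v u ltac:(lra)). pose proof (exp_le_compat v u ltac:(lra)).
    rewrite Rabs_right, (Rabs_right (u - v)) by lra. lra.
Qed.

Lemma ln_le_sub1 u : 0 < u -> ln u <= u - 1.
Proof. intros Hu. pose proof (exp_ineq1_le (ln u)). rewrite exp_ln in *; lra. Qed.

Lemma ln_dist_le u v c : 0 < c -> c <= u -> c <= v -> Rabs (ln u - ln v) <= Rabs (u - v) / c.
Proof.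
  intros Hc Hu Hv.
  assert (Hkey : forall a b, c <= a -> c <= b -> ln a - ln b <= Rabs (a - b) / c).
  { intros a b Ha Hb.
    replace (ln a - ln b) with (ln (a / b))
      by (unfold Rdiv; rewrite ln_mult, ln_Rinv by (try apply Rinv_0_lt_compat; lra); ring).
    eapply Rle_trans; [apply ln_le_sub1, Rdiv_lt_0_compat; lra |].
    replace (a / b - 1) with ((a - b) / b) by (field; lra).
    unfold Rdiv. eapply Rle_trans.
    - apply Rmult_le_compat_r; [left; apply Rinv_0_lt_compat; lra | apply RRle_abs].
    - apply Rmult_le_compat_l; [apply Rabs_pos | apply Rinv_le_contravar; lra]. }
  pose proof (Hkey u v Hu Hv) as Huv. pose proof (Hkey v u Hv Hu) as Hvu.
  rewrite <- Rabs_Ropp, Ropp_minus_distr in Hvu. apply Rabs_le. lra.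
Qed.

Section Systems.
Context {I : Type}.
Variable idx : list I.
Hypothesis idx_complete : forall i, In i idx.

Definition dim : R := INR (length idx).
Definition dist1 (s s' : I -> R) : R := lsum idx (fun i => Rabs (s i - s' i)).
Definition state (Y : I -> R -> R) (t : R) : I -> R := fun i => Y i t.

Definition solves (F : I -> (I -> R) -> R) (Y : I -> R -> R) : Prop :=
  (forall i, right_cont0 (Y i)) /\
  (forall i t, 0 < t -> derivable_pt_lim (Y i) t (F i (state Y t))).

Lemma dim_nonneg : 0 <= dim.
Proof. apply pos_INR. Qed.

Lemma dist1_nonneg s s' : 0 <= dist1 s s'.
Proof. apply lsum_nonneg. intros i. apply Rabs_pos. Qed.

Lemma Rabs_sub_le_dist1 s s' i : Rabs (s i - s' i) <= dist1 s s'.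
Proof. apply (le_lsum_term idx (fun j => Rabs (s j - s' j))); [intros; apply Rabs_pos | auto]. Qed.

Lemma dist1_le_dim_mul s s' B : (forall i, Rabs (s i - s' i) <= B) -> dist1 s s' <= dim * B.
Proof. intros Hb. unfold dist1, dim. rewrite <- lsum_const. now apply lsum_le. Qed.

Section Picard.
Variable F : I -> (I -> R) -> R.
Variables L M : R.
Variable y0 : I -> R.
Hypothesis L_pos : 0 < L.
Hypothesis M_nonneg : 0 <= M.
Hypothesis F_lipschitz : forall i s s', Rabs (F i s - F i s') <= L * dist1 s s'.
Hypothesis F_bounded : forall i s, Rabs (F i s) <= M.

Definition field_along (Y : I -> R -> R) (i : I) (t : R) : R := F i (state Y t).

Fixpoint picard (k : nat) : I -> R -> R :=
  match k with
  | O => fun i _ => y0 i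
  | S k' => fun i t => y0 i + RInt (field_along (picard k') i) 0 t
  end.

Lemma field_along_lipschitz Y K : (forall j, lipschitz (Y j) K) ->
  forall i, lipschitz (field_along Y i) (L * (dim * K)).
Proof.
  intros HY i s t. unfold field_along.
  eapply Rle_trans; [apply F_lipschitz |].
  rewrite !Rmult_assoc. apply Rmult_le_compat_l; [lra |].
  apply dist1_le_dim_mul. intros j. apply HY.
Qed.

Lemma picard_lipschitz k i : lipschitz (picard k i) M.
Proof.
  revert i. induction k as [| k IH]; intros i s t; simpl.
  - rewrite Rminus_diag, Rabs_R0. pose proof (Rabs_pos (t - s)). nra.
  - set (f := field_along (picard k) i).
    replace (y0 i + RInt f 0 t - (y0 i + RInt f 0 s)) with (RInt f 0 t - RInt f 0 s) by ring.
    apply (RInt_lipschitz _ (L * (dim * M))); [now apply field_along_lipschitz |].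
    intros. apply F_bounded.
Qed.

Lemma picard_ex_RInt k i a b : ex_RInt (field_along (picard k) i) a b.
Proof.
  apply (ex_RInt_lipschitz _ (L * (dim * M))).
  apply field_along_lipschitz. intros j. apply picard_lipschitz.
Qed.

Lemma picard_at_0 k i : picard k i 0 = y0 i.
Proof. destruct k; simpl; [reflexivity |]. rewrite RInt_point. simpl. unfold zero. simpl. ring. Qed.

(* The rate makes each Picard step halve the bound: [dim * L / picard_rate <= 1 / 2]. *)
Definition picard_rate : R := 2 * (dim + 1) * L.
Definition picard_const : R := dim * M / picard_rate.

Lemma picard_rate_pos : 0 < picard_rate.
Proof. unfold picard_rate. pose proof dim_nonneg. nra. Qed.

Lemma picard_const_nonneg : 0 <= picard_const.
Proof.
  unfold picard_const, Rdiv. apply Rmult_le_pos; [apply Rmult_le_pos; [apply dim_nonneg | lra] |].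
  left. apply Rinv_0_lt_compat, picard_rate_pos.
Qed.

Lemma picard_rate_halves k E : 1 <= E ->
  dim * (L * picard_const / 2 ^ k * (E - 1) / picard_rate) <= picard_const * E / 2 ^ S k.
Proof.
  intros HE. pose proof picard_rate_pos. pose proof picard_const_nonneg. pose proof dim_nonneg.
  assert (0 < / 2 ^ S k) by (apply Rinv_0_lt_compat, pow_lt; lra).
  assert (Hq : dim * (L * picard_const / 2 ^ k * (E - 1) / picard_rate)
               = dim / (dim + 1) * (picard_const * (E - 1) / 2 ^ S k)).
  { assert (2 ^ k <> 0) by (apply pow_nonzero; lra).
    unfold picard_rate. simpl. field. repeat split; lra. }
  assert (Hd : 0 <= dim / (dim + 1) <= 1).
  { split; [apply Rdiv_le_0_compat; lra |].
    apply Rmult_le_reg_r with (dim + 1); [lra |]. field_simplify; lra. }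
  assert (Hr : 0 <= picard_const * (E - 1) / 2 ^ S k <= picard_const * E / 2 ^ S k).
  { unfold Rdiv. split; [apply Rmult_le_pos; nra |]. nra. }
  rewrite Hq. nra.
Qed.

Lemma picard_step_bound k t : 0 <= t ->
  dist1 (state (picard (S k)) t) (state (picard k) t)
  <= picard_const * exp (picard_rate * t) / 2 ^ k.
Proof.
  pose proof picard_rate_pos. pose proof picard_const_nonneg. pose proof dim_nonneg.
  revert t. induction k as [| k IH]; intros t Ht.
  - eapply Rle_trans; [apply (dist1_le_dim_mul _ _ (M * t)) |].
    + intros i. unfold state. replace (picard 0 i t) with (picard 1 i 0) by apply picard_at_0.
      eapply Rle_trans; [apply picard_lipschitz |]. rewrite Rminus_0_r, Rabs_right; lra.
    + pose proof (exp_ineq1_le (picard_rate * t)).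
      replace (dim * (M * t)) with (picard_const * (picard_rate * t))
        by (unfold picard_const; field; lra).
      rewrite pow_O, Rdiv_1_r. apply Rmult_le_compat_l; lra.
  - set (E := exp (picard_rate * t)). set (A := L * picard_const / 2 ^ k).
    assert (HE : 1 <= E) by (pose proof (exp_ineq1_le (picard_rate * t)); unfold E; nra).
    assert (H2k : 0 < 2 ^ k) by (apply pow_lt; lra).
    eapply Rle_trans; [apply (dist1_le_dim_mul _ _ (A * (E - 1) / picard_rate)) |].
    + intros i. unfold state.
      change (picard (S (S k)) i t) with (y0 i + RInt (field_along (picard (S k)) i) 0 t).
      change (picard (S k) i t) with (y0 i + RInt (field_along (picard k) i) 0 t).
      match goal with |- Rabs (?a + ?x - (?a + ?y)) <= _ =>
        replace (a + x - (a + y)) with (x - y) by ring end.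
      unfold E. rewrite <- (RInt_exp_scaled A picard_rate t picard_rate_pos).
      apply RInt_dist_le; [lra | apply picard_ex_RInt | apply picard_ex_RInt | |].
      * apply (@ex_RInt_continuous R_CompleteNormedModule). intros z _.
        apply continuity_pt_filterlim, derivable_continuous_pt.
        eexists. apply is_derive_Reals, is_derive_exp_scaled.
      * intros s Hs. eapply Rle_trans; [apply F_lipschitz |].
        specialize (IH s ltac:(lra)). unfold A, Rdiv in *.
        replace (L * picard_const * / 2 ^ k * exp (picard_rate * s))
          with (L * (picard_const * exp (picard_rate * s) * / 2 ^ k)) by ring.
        apply Rmult_le_compat_l; lra.
    + now apply picard_rate_halves.
Qed.

Lemma picard_cauchy j k i t : 0 <= t -> (k <= j)%nat ->
  Rabs (picard j i t - picard k i t) <= 2 * picard_const * exp (picard_rate * t) / 2 ^ k.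
Proof.
  intros Ht Hkj. set (E := 2 * picard_const * exp (picard_rate * t)).
  assert (HE : 0 <= E)
    by (pose proof picard_const_nonneg; pose proof (exp_pos (picard_rate * t)); unfold E; nra).
  assert (Htel : forall m, Rabs (picard (k + m) i t - picard k i t) <= E / 2 ^ k - E / 2 ^ (k + m)).
  { induction m as [| m IH].
    - rewrite Nat.add_0_r, Rminus_diag, Rabs_R0. lra.
    - rewrite Nat.add_succ_r.
      pose proof (picard_step_bound (k + m) t Ht) as Hstep.
      pose proof (Rabs_sub_le_dist1 (state (picard (S (k + m))) t) (state (picard (k + m)) t) i)
        as Hcomp.
      unfold state in Hcomp, Hstep.
      assert (Rabs (picard (S (k + m)) i t - picard k i t)
              <= Rabs (picard (S (k + m)) i t - picard (k + m) i t)
                 + Rabs (picard (k + m) i t - picard k i t)).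
      { replace (picard (S (k + m)) i t - picard k i t)
          with ((picard (S (k + m)) i t - picard (k + m) i t) + (picard (k + m) i t - picard k i t))
          by ring.
        apply Rabs_triang. }
      assert (picard_const * exp (picard_rate * t) / 2 ^ (k + m)
              = E / 2 ^ (k + m) - E / 2 ^ S (k + m)).
      { pose proof (pow_lt 2 (k + m) ltac:(lra)). unfold E. simpl. field. lra. }
      lra. }
  replace j with (k + (j - k))%nat by lia.
  eapply Rle_trans; [apply Htel |].
  assert (0 <= E / 2 ^ (k + (j - k))).
  { apply Rdiv_le_0_compat; [exact HE | apply pow_lt; lra]. }
  lra.
Qed.

(* Evaluating at [Rmax 0 t] makes the limit globally Lipschitz, hence integrable anywhere. *)
Definition picard_limit (i : I) (t : R) : R := real (Lim_seq (fun k => picard k i (Rmax 0 t))).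

Lemma is_lim_seq_picard i t : is_lim_seq (fun k => picard k i (Rmax 0 t)) (picard_limit i t).
Proof.
  apply Lim_seq_correct', ex_lim_seq_cauchy_corr. intros eps.
  set (t' := Rmax 0 t). assert (Ht : 0 <= t') by apply Rmax_l.
  destruct (small_over_pow2 (2 * (2 * picard_const * exp (picard_rate * t'))) eps (cond_pos eps))
    as [N HN].
  exists N. intros n m Hn Hm.
  pose proof (picard_cauchy n N i t' Ht Hn). pose proof (picard_cauchy m N i t' Ht Hm).
  set (B := 2 * picard_const * exp (picard_rate * t')) in *.
  replace (picard n i t' - picard m i t')
    with ((picard n i t' - picard N i t') - (picard m i t' - picard N i t')) by ring.
  eapply Rle_lt_trans; [apply Rabs_triang |]. rewrite Rabs_Ropp.
  replace (2 * B / 2 ^ N) with (2 * (B / 2 ^ N)) in HN by (unfold Rdiv; ring).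
  lra.
Qed.

Lemma picard_limit_dist k i t : 0 <= t ->
  Rabs (picard_limit i t - picard k i t) <= 2 * picard_const * exp (picard_rate * t) / 2 ^ k.
Proof.
  intros Ht. pose proof (is_lim_seq_picard i t) as Hlim. rewrite Rmax_right in Hlim by lra.
  apply (is_lim_seq_dist_le _ _ _ _ k Hlim). intros j Hj. now apply picard_cauchy.
Qed.

Lemma picard_limit_lipschitz i : lipschitz (picard_limit i) M.
Proof.
  intros s t.
  pose proof (is_lim_seq_minus' _ _ _ _ (is_lim_seq_picard i t) (is_lim_seq_picard i s)) as Hlim.
  rewrite <- (Rminus_0_r (picard_limit i t - picard_limit i s)).
  apply (is_lim_seq_dist_le _ _ _ _ 0 Hlim). intros j _. rewrite Rminus_0_r.
  eapply Rle_trans; [apply picard_lipschitz |]. apply Rmult_le_compat_l; [lra |].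
  unfold Rmax. destruct (Rle_dec 0 t), (Rle_dec 0 s); apply Rabs_le;
    unfold Rabs; destruct (Rcase_abs (t - s)); lra.
Qed.

Lemma field_along_picard_limit_lipschitz i :
  lipschitz (field_along picard_limit i) (L * (dim * M)).
Proof. apply field_along_lipschitz. apply picard_limit_lipschitz. Qed.

Lemma picard_limit_integral i t : 0 <= t ->
  picard_limit i t = y0 i + RInt (field_along picard_limit i) 0 t.
Proof.
  intros Ht. set (E := 2 * picard_const * exp (picard_rate * t)).
  assert (HE : 0 <= E)
    by (pose proof picard_const_nonneg; pose proof (exp_pos (picard_rate * t)); unfold E; nra).
  apply Rminus_diag_uniq, (eq0_of_le_over_pow2 _ (E + t * (L * (dim * E)))).
  intros k. assert (H2k : 0 < 2 ^ k) by (apply pow_lt; lra).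
  assert (Hlim : forall j s, 0 <= s <= t -> Rabs (picard_limit j s - picard k j s) <= E / 2 ^ k).
  { intros j s Hs. eapply Rle_trans; [now apply picard_limit_dist |].
    unfold E, Rdiv. apply Rmult_le_compat_r; [left; now apply Rinv_0_lt_compat |].
    apply Rmult_le_compat_l; [pose proof picard_const_nonneg; lra |].
    apply exp_le_compat. pose proof picard_rate_pos. nra. }
  assert (Hfirst : Rabs (picard_limit i t - picard (S k) i t) <= E / 2 ^ k).
  { eapply Rle_trans; [now apply picard_limit_dist |]. fold E. simpl.
    apply Rmult_le_compat_l; [exact HE |]. apply Rinv_le_contravar; lra. }
  assert (Hint : Rabs (RInt (field_along (picard k) i) 0 t - RInt (field_along picard_limit i) 0 t)
                 <= t * (L * (dim * (E / 2 ^ k)))).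
  { replace (t * (L * (dim * (E / 2 ^ k)))) with (RInt (fun _ => L * (dim * (E / 2 ^ k))) 0 t)
      by (rewrite RInt_const; unfold scal; simpl; unfold mult; simpl; ring).
    apply RInt_dist_le; [lra | apply picard_ex_RInt | |apply ex_RInt_const |].
    - apply (ex_RInt_lipschitz _ _ _ _ (field_along_picard_limit_lipschitz i)).
    - intros s Hs. eapply Rle_trans; [apply F_lipschitz |].
      apply Rmult_le_compat_l; [lra |]. apply dist1_le_dim_mul. intros j.
      unfold state. rewrite <- Rabs_Ropp, Ropp_minus_distr. now apply Hlim. }
  change (picard (S k) i t) with (y0 i + RInt (field_along (picard k) i) 0 t) in Hfirst.
  replace (picard_limit i t - (y0 i + RInt (field_along picard_limit i) 0 t))
    with ((picard_limit i t - (y0 i + RInt (field_along (picard k) i) 0 t))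
          + (RInt (field_along (picard k) i) 0 t - RInt (field_along picard_limit i) 0 t)) by ring.
  eapply Rle_trans; [apply Rabs_triang |].
  replace ((E + t * (L * (dim * E))) / 2 ^ k)
    with (E / 2 ^ k + t * (L * (dim * (E / 2 ^ k)))) by (field; lra).
  lra.
Qed.

Lemma picard_limit_derive i t : 0 < t ->
  derivable_pt_lim (picard_limit i) t (F i (state picard_limit t)).
Proof.
  intros Ht.
  assert (D : is_derive (fun b => picard_limit i b - y0 i) t (field_along picard_limit i t)).
  { apply (is_derive_RInt (field_along picard_limit i) _ 0).
    - exists (mkposreal t Ht). intros b Hb.
      assert (Hb0 : 0 < b).
      { unfold ball in Hb; simpl in Hb. unfold AbsRing_ball, abs, minus, plus, opp in Hb.
        simpl in Hb. apply Rabs_def2 in Hb. lra. }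
      assert (Heq : picard_limit i b - y0 i = RInt (field_along picard_limit i) 0 b)
        by (rewrite (picard_limit_integral i b) by lra; ring).
      simpl. rewrite Heq. apply (RInt_correct (field_along picard_limit i)).
      apply (ex_RInt_lipschitz _ _ _ _ (field_along_picard_limit_lipschitz i)).
    - apply (lipschitz_continuous _ _ _ (field_along_picard_limit_lipschitz i)). }
  apply is_derive_Reals.
  apply (is_derive_ext (fun b => picard_limit i b - y0 i + y0 i));
    [intros b; change (picard_limit i b - y0 i + y0 i = picard_limit i b); ring |].
  rewrite <- (Rplus_0_r (F i (state picard_limit t))).
  apply is_derive_Reals, (derivable_pt_lim_plus _ (fun _ => y0 i));
    [now apply is_derive_Reals | apply derivable_pt_lim_const].
Qed.

Lemma picard_limit_solves : solves F picard_limit /\ forall i, picard_limit i 0 = y0 i.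
Proof.
  split; [split |].
  - intros i. apply (lipschitz_right_cont0 _ M), picard_limit_lipschitz.
  - intros i t Ht. now apply picard_limit_derive.
  - intros i. rewrite picard_limit_integral, RInt_point by lra. simpl. unfold zero. simpl. ring.
Qed.

End Picard.

Definition lip_bounded (K : (I -> R) -> Prop) (f : (I -> R) -> R) : Prop :=
  exists L B, 0 <= L /\ 0 <= B /\ forall s s', K s -> K s' ->
    Rabs (f s) <= B /\ Rabs (f s - f s') <= L * dist1 s s'.

Definition box (lo hi : I -> R) (s : I -> R) : Prop := forall i, lo i <= s i <= hi i.

Section LipBounded.
Variable K : (I -> R) -> Prop.

Lemma lip_bounded_const c : lip_bounded K (fun _ => c).
Proof.
  exists 0, (Rabs c). repeat split; [lra | apply Rabs_pos | lra |].
  rewrite Rminus_diag, Rabs_R0, Rmult_0_l. lra.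
Qed.

Lemma lip_bounded_plus f g : lip_bounded K f -> lip_bounded K g ->
  lip_bounded K (fun s => f s + g s).
Proof.
  intros [L1 [B1 [HL1 [HB1 Hf]]]] [L2 [B2 [HL2 [HB2 Hg]]]].
  exists (L1 + L2), (B1 + B2). split; [lra |]. split; [lra |].
  intros s s' Hs Hs'. destruct (Hf s s' Hs Hs'), (Hg s s' Hs Hs'). split.
  - eapply Rle_trans; [apply Rabs_triang | lra].
  - replace (f s + g s - (f s' + g s')) with ((f s - f s') + (g s - g s')) by ring.
    eapply Rle_trans; [apply Rabs_triang | lra].
Qed.

Lemma lip_bounded_opp f : lip_bounded K f -> lip_bounded K (fun s => - f s).
Proof.
  intros [L1 [B1 [HL1 [HB1 Hf]]]]. exists L1, B1. split; [lra |]. split; [lra |].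
  intros s s' Hs Hs'. rewrite Rabs_Ropp.
  replace (- f s - - f s') with (- (f s - f s')) by ring. rewrite Rabs_Ropp. auto.
Qed.

Lemma lip_bounded_minus f g : lip_bounded K f -> lip_bounded K g ->
  lip_bounded K (fun s => f s - g s).
Proof. intros Hf Hg. now apply (lip_bounded_plus f (fun s => - g s)), lip_bounded_opp. Qed.

Lemma lip_bounded_mult f g : lip_bounded K f -> lip_bounded K g ->
  lip_bounded K (fun s => f s * g s).
Proof.
  intros [L1 [B1 [HL1 [HB1 Hf]]]] [L2 [B2 [HL2 [HB2 Hg]]]].
  exists (B1 * L2 + B2 * L1), (B1 * B2). split; [nra |]. split; [nra |].
  intros s s' Hs Hs'.
  destruct (Hf s s' Hs Hs') as [Hf1 Hf2], (Hg s s' Hs Hs') as [Hg1 Hg2].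
  destruct (Hg s' s' Hs' Hs') as [Hg1' _].
  pose proof (dist1_nonneg s s'). split.
  - rewrite Rabs_mult. apply Rmult_le_compat; auto; apply Rabs_pos.
  - replace (f s * g s - f s' * g s') with (f s * (g s - g s') + g s' * (f s - f s')) by ring.
    eapply Rle_trans; [apply Rabs_triang |]. rewrite !Rabs_mult.
    assert (Rabs (f s) * Rabs (g s - g s') <= B1 * (L2 * dist1 s s'))
      by (apply Rmult_le_compat; auto; apply Rabs_pos).
    assert (Rabs (g s') * Rabs (f s - f s') <= B2 * (L1 * dist1 s s'))
      by (apply Rmult_le_compat; auto; apply Rabs_pos).
    nra.
Qed.

Lemma lip_bounded_inv f c : lip_bounded K f -> 0 < c -> (forall s, K s -> c <= f s) ->
  lip_bounded K (fun s => / f s).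
Proof.
  intros [L1 [B1 [HL1 [HB1 Hf]]]] Hc Hlow.
  assert (Hc2 : 0 < / (c * c)) by (apply Rinv_0_lt_compat; nra).
  exists (L1 / (c * c)), (/ c). split; [apply Rmult_le_pos; lra |].
  split; [left; now apply Rinv_0_lt_compat |].
  intros s s' Hs Hs'. destruct (Hf s s' Hs Hs') as [_ Hf2].
  pose proof (Hlow s Hs). pose proof (Hlow s' Hs'). split.
  - rewrite Rabs_inv, Rabs_right by lra. apply Rinv_le_contravar; lra.
  - replace (/ f s - / f s') with (- (f s - f s') * / (f s * f s')) by (field; lra).
    rewrite Rabs_mult, Rabs_Ropp, Rabs_inv, (Rabs_right (f s * f s')) by nra.
    replace (L1 / (c * c) * dist1 s s') with (L1 * dist1 s s' * / (c * c)) by (unfold Rdiv; ring).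
    apply Rmult_le_compat; [apply Rabs_pos | left; apply Rinv_0_lt_compat; nra | exact Hf2 |].
    apply Rinv_le_contravar; nra.
Qed.

Lemma lip_bounded_exp f : lip_bounded K f -> lip_bounded K (fun s => exp (f s)).
Proof.
  intros [L1 [B1 [HL1 [HB1 Hf]]]].
  exists (exp B1 * L1), (exp B1). split; [pose proof (exp_pos B1); nra |].
  split; [left; apply exp_pos |].
  intros s s' Hs Hs'. destruct (Hf s s' Hs Hs') as [Hf1 Hf2], (Hf s' s' Hs' Hs') as [Hf1' _].
  split.
  - rewrite Rabs_right by (left; apply exp_pos). apply exp_le_compat.
    apply Rabs_le_between in Hf1. lra.
  - eapply Rle_trans; [now apply (exp_dist_le _ _ B1) |]. rewrite Rmult_assoc.
    apply Rmult_le_compat_l; [left; apply exp_pos | exact Hf2].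
Qed.

Lemma lip_bounded_ln f c : lip_bounded K f -> 0 < c -> (forall s, K s -> c <= f s) ->
  lip_bounded K (fun s => ln (f s)).
Proof.
  intros [L1 [B1 [HL1 [HB1 Hf]]]] Hc Hlow.
  assert (Hc' : 0 < / c) by now apply Rinv_0_lt_compat.
  exists (L1 / c), (B1 + / c + 1). split; [apply Rmult_le_pos; lra |]. split; [lra |].
  intros s s' Hs Hs'. destruct (Hf s s' Hs Hs') as [Hf1 Hf2].
  pose proof (Hlow s Hs). pose proof (Hlow s' Hs'). split.
  - assert (ln (f s) <= f s - 1) by (apply ln_le_sub1; lra).
    assert (ln (/ f s) <= / f s - 1) by (apply ln_le_sub1, Rinv_0_lt_compat; lra).
    assert (/ f s <= / c) by (apply Rinv_le_contravar; lra).
    rewrite ln_Rinv in * by lra. apply Rabs_le_between in Hf1. apply Rabs_le. lra.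
  - eapply Rle_trans; [now apply (ln_dist_le _ _ c) |].
    unfold Rdiv. rewrite Rmult_assoc, (Rmult_comm (/ c)), <- Rmult_assoc.
    now apply Rmult_le_compat_r; [lra |].
Qed.

End LipBounded.

Lemma lip_bounded_coord lo hi i : lip_bounded (box lo hi) (fun s => s i).
Proof.
  exists 1, (Rabs (lo i) + Rabs (hi i)). split; [lra |].
  split; [pose proof (Rabs_pos (lo i)); pose proof (Rabs_pos (hi i)); lra |].
  intros s s' Hs _. split.
  - destruct (Hs i). apply Rabs_le. unfold Rabs. do 2 destruct Rcase_abs; lra.
  - rewrite Rmult_1_l. apply Rabs_sub_le_dist1.
Qed.

Lemma lip_bounded_ext K f s s' : lip_bounded K f -> K s -> K s' ->
  (forall i, s i = s' i) -> f s = f s'.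
Proof.
  intros [L [B [HL [HB Hf]]]] Hs Hs' Hss'.
  assert (Hd : dist1 s s' <= dim * 0)
    by (apply dist1_le_dim_mul; intros i; rewrite Hss', Rminus_diag, Rabs_R0; lra).
  destruct (Hf s s' Hs Hs') as [_ Hlip]. pose proof (dist1_nonneg s s').
  apply Rminus_diag_uniq, Rabs_eq_0. pose proof (Rabs_pos (f s - f s')). nra.
Qed.

Lemma lip_bounded_uniform K (F : I -> (I -> R) -> R) : (forall i, lip_bounded K (F i)) ->
  exists L B, 0 <= L /\ 0 <= B /\ forall i s s', K s -> K s' ->
    Rabs (F i s) <= B /\ Rabs (F i s - F i s') <= L * dist1 s s'.
Proof.
  intros HF.
  assert (Hl : forall l, exists L B, 0 <= L /\ 0 <= B /\ forall i s s', In i l -> K s -> K s' ->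
             Rabs (F i s) <= B /\ Rabs (F i s - F i s') <= L * dist1 s s').
  { induction l as [| j l [L [B [HL [HB IH]]]]].
    - exists 0, 0. split; [lra |]. split; [lra |]. intros i s s' [].
    - destruct (HF j) as [Lj [Bj [HLj [HBj Hj]]]].
      exists (L + Lj), (B + Bj). split; [lra |]. split; [lra |].
      intros i s s' [Hji | Hi] Hs Hs'; pose proof (dist1_nonneg s s').
      + subst j. destruct (Hj s s' Hs Hs'). split; nra.
      + destruct (IH i s s' Hi Hs Hs'). split; nra. }
  destruct (Hl idx) as [L [B [HL [HB H]]]]. exists L, B. split; [exact HL |]. split; [exact HB |].
  intros i s s' Hs Hs'. now apply H.
Qed.

Definition clamp (lo hi : I -> R) (s : I -> R) : I -> R := fun i => clampR (lo i) (hi i) (s i).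

Definition points_inward (lo hi : I -> R) (F : I -> (I -> R) -> R) : Prop :=
  forall i s, box lo hi s -> (s i = lo i -> 0 <= F i s) /\ (s i = hi i -> F i s <= 0).

Lemma clamp_in_box lo hi s : (forall i, lo i <= hi i) -> box lo hi (clamp lo hi s).
Proof. intros Hlh i. now apply clampR_in. Qed.

Lemma dist1_clamp_le lo hi s s' : dist1 (clamp lo hi s) (clamp lo hi s') <= dist1 s s'.
Proof. apply lsum_le. intros i _. apply clampR_dist_le. Qed.

Theorem box_invariant_solution lo hi F y0 :
  (forall i, lip_bounded (box lo hi) (F i)) -> points_inward lo hi F -> box lo hi y0 ->
  exists Y, solves F Y /\ (forall i, Y i 0 = y0 i) /\
    forall t, 0 <= t -> box lo hi (state Y t).
Proof.
  intros HF Hin Hy0.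
  assert (Hlh : forall i, lo i <= hi i) by (intros i; destruct (Hy0 i); lra).
  destruct (lip_bounded_uniform _ F HF) as [L [B [HL [HB HLB]]]].
  set (G := fun i s => F i (clamp lo hi s)).
  assert (G_lip : forall i s s', Rabs (G i s - G i s') <= (L + 1) * dist1 s s').
  { intros i s s'.
    destruct (HLB i _ _ (clamp_in_box lo hi s Hlh) (clamp_in_box lo hi s' Hlh)) as [_ Hlip].
    pose proof (dist1_clamp_le lo hi s s'). pose proof (dist1_nonneg s s').
    pose proof (dist1_nonneg (clamp lo hi s) (clamp lo hi s')). unfold G. nra. }
  assert (G_bounded : forall i s, Rabs (G i s) <= B)
    by (intros i s; apply (HLB i _ _ (clamp_in_box lo hi s Hlh) (clamp_in_box lo hi s Hlh))).
  destruct (picard_limit_solves G (L + 1) B y0 ltac:(lra) HB G_lip G_bounded)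
    as [[Hrc Hder] HY0].
  set (Y := picard_limit G y0) in *.
  assert (Hbox : forall t, 0 <= t -> box lo hi (state Y t)).
  { intros t Ht i. split.
    - apply (lower_bound_preserved (Y i) (fun u => G i (state Y u))); auto.
      + rewrite HY0. apply Hy0.
      + intros u Hu Hlt. apply (Hin i _ (clamp_in_box lo hi _ Hlh)).
        now apply clampR_below.
    - apply (upper_bound_preserved (Y i) (fun u => G i (state Y u))); auto.
      + rewrite HY0. apply Hy0.
      + intros u Hu Hlt. apply (Hin i _ (clamp_in_box lo hi _ Hlh)).
        now apply clampR_above. }
  exists Y. split; [split |]; [exact Hrc | | split; [exact HY0 | exact Hbox]].
  intros i t Ht. replace (F i (state Y t)) with (G i (state Y t)); [now apply Hder |].
  apply (lip_bounded_ext _ _ _ _ (HF i) (clamp_in_box lo hi _ Hlh) (Hbox t ltac:(lra))).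
  intros j. apply clampR_id, (Hbox t ltac:(lra)).
Qed.

Definition sq_dist (s s' : I -> R) : R := lsum idx (fun i => (s i - s' i) * (s i - s' i)).

Lemma sq_dist_nonneg s s' : 0 <= sq_dist s s'.
Proof. apply lsum_nonneg. intros i. apply Rle_0_sqr. Qed.

Lemma sqr_le_sq_dist s s' i : (s i - s' i) * (s i - s' i) <= sq_dist s s'.
Proof.
  apply (le_lsum_term idx (fun j => (s j - s' j) * (s j - s' j))); [| auto].
  intros j. apply Rle_0_sqr.
Qed.

Lemma dist1_sqr_le s s' : dist1 s s' * dist1 s s' <= dim * sq_dist s s'.
Proof. exact (lsum_abs_sqr_le idx (fun i => s i - s' i)). Qed.

Lemma sq_dist_growth_le s s' f f' L : 0 <= L ->
  (forall i, Rabs (f i - f' i) <= L * dist1 s s') ->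
  lsum idx (fun i => 2 * (s i - s' i) * (f i - f' i)) <= 2 * L * dim * sq_dist s s'.
Proof.
  intros HL Hf. pose proof (dist1_nonneg s s').
  apply Rle_trans with (lsum idx (fun i => 2 * L * dist1 s s' * Rabs (s i - s' i))).
  - apply lsum_le. intros i _. cbv beta. specialize (Hf i).
    assert ((s i - s' i) * (f i - f' i) <= Rabs (s i - s' i) * Rabs (f i - f' i))
      by (rewrite <- Rabs_mult; apply RRle_abs).
    assert (Rabs (s i - s' i) * Rabs (f i - f' i) <= Rabs (s i - s' i) * (L * dist1 s s'))
      by (apply Rmult_le_compat_l; [apply Rabs_pos | exact Hf]).
    lra.
  - pose proof (dist1_sqr_le s s').
    rewrite lsum_scal. fold (dist1 s s'). nra.
Qed.

Lemma sq_dist_right_cont0 F Y Z : solves F Y -> solves F Z ->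
  right_cont0 (fun t => sq_dist (state Z t) (state Y t)).
Proof.
  intros [HY _] [HZ _]. apply (right_cont0_lsum idx (fun i t => (Z i t - Y i t) * (Z i t - Y i t))).
  intros i. apply right_cont0_mult; apply right_cont0_minus; auto.
Qed.

Lemma sq_dist_derive F Y Z t : solves F Y -> solves F Z -> 0 < t ->
  derivable_pt_lim (fun u => sq_dist (state Z u) (state Y u)) t
    (lsum idx (fun i => 2 * (Z i t - Y i t) * (F i (state Z t) - F i (state Y t)))).
Proof.
  intros [_ HY] [_ HZ] Ht.
  apply (derivable_pt_lim_lsum idx (fun i u => (Z i u - Y i u) * (Z i u - Y i u))).
  intros i. cbv beta.
  replace (2 * (Z i t - Y i t) * (F i (state Z t) - F i (state Y t)))
    with ((F i (state Z t) - F i (state Y t)) * (Z i t - Y i t)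
          + (Z i t - Y i t) * (F i (state Z t) - F i (state Y t))) by ring.
  apply (derivable_pt_lim_mult (fun u => Z i u - Y i u) (fun u => Z i u - Y i u));
    apply (derivable_pt_lim_minus (Z i) (Y i)); auto.
Qed.

Lemma sq_dist_same s s' : (forall i, s i = s' i) -> sq_dist s s' = 0.
Proof.
  intros Hss'. apply Rle_antisym; [| apply sq_dist_nonneg].
  replace 0 with (lsum idx (fun _ => 0)) by (rewrite lsum_const; ring).
  apply lsum_le. intros i _. cbv beta. rewrite Hss', Rminus_diag. lra.
Qed.

Lemma sq_dist_growth_near K F Y Z L d t : 0 < d -> 0 <= L -> 0 <= t ->
  (forall i s s', K s -> K s' -> Rabs (F i s - F i s') <= L * dist1 s s') ->
  (forall t s, 0 <= t -> (forall i, Rabs (s i - Y i t) < d) -> K s) ->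
  sq_dist (state Z t) (state Y t) < d * d ->
  lsum idx (fun j => 2 * (Z j t - Y j t) * (F j (state Z t) - F j (state Y t)))
    <= 2 * L * dim * sq_dist (state Z t) (state Y t).
Proof.
  intros Hd HL Ht HF Htube Hnear.
  assert (KZ : K (state Z t)).
  { apply (Htube t _ Ht). intros j.
    rewrite <- (Rabs_right d) by lra. apply Rsqr_lt_abs_0. unfold Rsqr.
    eapply Rle_lt_trans; [apply (sqr_le_sq_dist (state Z t) (state Y t) j) | exact Hnear]. }
  assert (KY : K (state Y t)).
  { apply (Htube t _ Ht). intros j. unfold state. rewrite Rminus_diag, Rabs_R0. exact Hd. }
  apply sq_dist_growth_le; [exact HL |]. intros j. now apply HF.
Qed.

(* Gronwall for [W t = sq_dist (state Z t) (state Y t) * exp (- kp t)]: [W] cannot increase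
   while [Z] stays in the [d]-tube around [Y], and leaving the tube before time [T] would
   require [W >= d^2 exp (- kp T)]. *)
Theorem solves_unique K F Y Z d T : 0 < d -> 0 <= T ->
  (forall i, lip_bounded K (F i)) ->
  (forall t s, 0 <= t -> (forall i, Rabs (s i - Y i t) < d) -> K s) ->
  solves F Y -> solves F Z -> (forall i, Z i 0 = Y i 0) -> forall i, Z i T = Y i T.
Proof.
  intros Hd HT HF Htube HY HZ H0 i.
  destruct (lip_bounded_uniform K F HF) as [L [B [HL [_ HLB]]]].
  set (kp := 2 * L * dim). assert (Hkp : 0 <= kp) by (pose proof dim_nonneg; unfold kp; nra).
  set (V := fun t => sq_dist (state Z t) (state Y t)).
  set (dV := fun t =>
         lsum idx (fun j => 2 * (Z j t - Y j t) * (F j (state Z t) - F j (state Y t)))).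
  set (e := fun t => exp (- (kp * t))).
  assert (He : forall t, derivable_pt_lim e t (- kp * e t))
    by (intros t; apply is_derive_Reals; unfold e; auto_derive; [easy | ring]).
  assert (HeT : 0 < e T) by apply exp_pos.
  assert (HW : V T * e T = 0).
  { apply (eq0_of_deriv_nonpos_below (fun t => V t * e t) (fun t => dV t * e t + V t * (- kp * e t))
             (d * d * e T) T); [apply Rmult_lt_0_compat; nra | exact HT | | | | |].
    - apply right_cont0_mult; [now apply (sq_dist_right_cont0 F) |].
      apply continuity_pt_right_cont0, derivable_continuous_pt. eexists. apply He.
    - unfold V. rewrite sq_dist_same; [ring | exact H0].
    - apply Rmult_le_pos; [apply sq_dist_nonneg | lra].
    - intros t Ht. apply derivable_pt_lim_mult; [now apply (sq_dist_derive F) | apply He].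
    - intros t [Ht HtT] Hlt. assert (Het : 0 < e t) by apply exp_pos.
      assert (e T <= e t) by (apply exp_le_compat; nra).
      assert (Hnear : V t < d * d) by (apply Rmult_lt_reg_r with (e t); nra).
      assert (dV t <= kp * V t).
      { apply (sq_dist_growth_near K F Y Z L d t Hd HL ltac:(lra)); [| exact Htube | exact Hnear].
        intros j s s' Hs Hs'. now apply HLB. }
      nra. }
  assert (HVT : V T = 0) by (apply Rmult_integral in HW; destruct HW; lra).
  pose proof (sqr_le_sq_dist (state Z T) (state Y T) i). pose proof (Rle_0_sqr (Z i T - Y i T)).
  fold (V T) in *. unfold state, Rsqr in *. nra.
Qed.

End Systems.

Inductive coord : Type := cx | ch | cn.

Definition coords : list coord := cx :: ch :: cn :: nil.

Lemma coords_complete : forall i, In i coords.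
Proof. intros []; simpl; auto. Qed.

Definition vec3 (a b c : R) (i : coord) : R := match i with cx => a | ch => b | cn => c end.

Definition traj (x h n : R -> R) (i : coord) : R -> R :=
  match i with cx => x | ch => h | cn => n end.

Definition model_field (P : params) (i : coord) (s : coord -> R) : R :=
  match i with
  | cx => Fx P (s cx) (s ch) (s cn)
  | ch => Fh P (s cx) (s ch) (s cn)
  | cn => Defs.Fn P (s cx) (s ch) (s cn)
  end.

Lemma is_solution_solves P x h n :
  is_solution P x h n -> solves (model_field P) (traj x h n).
Proof.
  intros [_ [Hx [Hh [Hn Hd]]]]. split.
  - intros []; assumption.
  - intros [] t Ht; apply (Hd t Ht).
Qed.

Lemma solves_is_solution P Y : solves (model_field P) Y ->
  (forall t, 0 <= t -> 0 < Y ch t) -> is_solution P (Y cx) (Y ch) (Y cn).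
Proof.
  intros [Hrc Hd] Hpos. split; [exact Hpos |].
  split; [apply Hrc |]. split; [apply Hrc |]. split; [apply Hrc |].
  intros t Ht. split; [| split]; [apply (Hd cx) | apply (Hd ch) | apply (Hd cn)]; exact Ht.
Qed.

Section Model.
Variable P : params.
Hypothesis HP : params_ok P.

Lemma dS_nonneg h : 0 <= dS P h.
Proof.
  destruct HP as (_ & _ & _ & _ & _ & _ & Hdmax & _).
  unfold dS. pose proof (exp_pos (m P * ln h)). pose proof (exp_pos (m P * ln (h50 P))).
  unfold Rpower. apply Rmult_le_pos; [nra | left; apply Rinv_0_lt_compat; lra].
Qed.

Section Box.
Variables lo hi : coord -> R.
Hypothesis lo_h_pos : 0 < lo ch.

Let K := box lo hi.

Lemma lip_bounded_Rpower_h a : lip_bounded coords K (fun s => Rpower (s ch) a).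
Proof.
  unfold Rpower. apply lip_bounded_exp, lip_bounded_mult; [apply lip_bounded_const |].
  apply (lip_bounded_ln _ _ _ (lo ch));
    [apply lip_bounded_coord, coords_complete | exact lo_h_pos |].
  intros s Hs. apply (Hs ch).
Qed.

Lemma lip_bounded_dS : lip_bounded coords K (fun s => dS P (s ch)).
Proof.
  unfold dS, Rdiv. apply lip_bounded_mult;
    [apply lip_bounded_mult; [apply lip_bounded_const | apply lip_bounded_Rpower_h] |].
  apply (lip_bounded_inv _ _ _ (Rpower (h50 P) (m P))); [| apply exp_pos |].
  - apply lip_bounded_plus; [apply lip_bounded_const | apply lip_bounded_Rpower_h].
  - intros s _. pose proof (exp_pos (m P * ln (s ch))). unfold Rpower. lra.
Qed.

Lemma lip_bounded_Sfun : lip_bounded coords K (fun s => Sfun P (s ch)).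
Proof.
  unfold Sfun, Rdiv. apply lip_bounded_plus; [apply lip_bounded_minus |].
  - apply lip_bounded_mult; [apply lip_bounded_const |].
    apply (lip_bounded_inv _ _ _ 1); [| lra |].
    + apply lip_bounded_plus, lip_bounded_exp, lip_bounded_opp, lip_bounded_mult;
        [apply lip_bounded_const | apply lip_bounded_const | apply lip_bounded_minus].
      * apply lip_bounded_coord, coords_complete.
      * apply lip_bounded_const.
    + intros s _. pose proof (exp_pos (- (lam P * (s ch - hc P)))). lra.
  - apply lip_bounded_const.
  - apply lip_bounded_mult; [apply lip_bounded_const | apply lip_bounded_dS].
Qed.

Lemma lip_bounded_mu : lip_bounded coords K (fun s => mu P (s ch)).
Proof. apply lip_bounded_mult; [apply lip_bounded_const | apply lip_bounded_Rpower_h]. Qed.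

Lemma lip_bounded_Gfun : lip_bounded coords K (fun s => Gfun P (s ch)).
Proof.
  destruct HP as (_ & _ & _ & _ & _ & _ & _ & _ & _ & _ & _ & _ & _ & _ & HKg & _).
  unfold Gfun, Rdiv. apply lip_bounded_mult; [apply lip_bounded_const |].
  apply (lip_bounded_inv _ _ _ (Kg P + lo ch)); [| lra |].
  - apply lip_bounded_plus; [apply lip_bounded_const | apply lip_bounded_coord, coords_complete].
  - intros s Hs. destruct (Hs ch). lra.
Qed.

Lemma lip_bounded_Gam : 0 < 1 + eta P * lo cn -> lip_bounded coords K (fun s => Gam P (s cn)).
Proof.
  destruct HP as (_ & _ & _ & _ & _ & _ & _ & _ & _ & _ & _ & _ & _ & _ & _ & _ & Heta & _).
  intros Hn. unfold Gam, Rdiv. apply lip_bounded_mult; [apply lip_bounded_const |].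
  apply (lip_bounded_inv _ _ _ (1 + eta P * lo cn)); [| exact Hn |].
  - apply lip_bounded_plus, lip_bounded_mult;
      [apply lip_bounded_const | apply lip_bounded_const |
       apply lip_bounded_coord, coords_complete].
  - intros s Hs. destruct (Hs cn). nra.
Qed.

Lemma lip_bounded_model_field i : 0 < 1 + eta P * lo cn ->
  lip_bounded coords K (model_field P i).
Proof.
  intros Hn.
  destruct i; simpl; unfold Fx, Fh, Defs.Fn, Dfun;
    repeat first
      [ apply lip_bounded_coord, coords_complete | apply lip_bounded_const
      | apply lip_bounded_Sfun | apply lip_bounded_mu | apply lip_bounded_dS
      | apply lip_bounded_Gfun | now apply lip_bounded_Gam
      | apply lip_bounded_plus | apply lip_bounded_opp | apply lip_bounded_mult ].
Qed.

End Box.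

(* Above [h_max] the proton clearance [Gam n (h - 1) >= gamma0 / (1 + eta) (h - 1)]
   beats the production [alpha n (1 + beta x) Gfun h <= alpha (1 + beta)]. *)
Definition h_max : R := 1 + alpha P * (1 + beta P) * (1 + eta P) / gamma0 P.

Lemma Fh_at_low_h x h n : 0 <= x <= 1 -> 0 <= n <= 1 -> 0 < h <= 1 -> 0 <= Fh P x h n.
Proof.
  intros Hx Hn Hh.
  destruct HP as (_ & _ & _ & _ & _ & _ & _ & _ & _ & _ & _ & _ & Hal & Hbe & HKg & Hg & Het & _).
  unfold Fh, Gfun, Gam.
  assert (0 < Kg P / (Kg P + h)) by (apply Rdiv_lt_0_compat; lra).
  assert (0 < gamma0 P / (1 + eta P * n)) by (apply Rdiv_lt_0_compat; nra).
  assert (0 <= alpha P * n * (1 + beta P * x)) by (apply Rmult_le_pos; nra).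
  nra.
Qed.

Lemma Fh_at_high_h x h n : 0 <= x <= 1 -> 0 <= n <= 1 -> h_max <= h -> Fh P x h n <= 0.
Proof.
  intros Hx Hn Hh. unfold h_max in Hh.
  destruct HP as (_ & _ & _ & _ & _ & _ & _ & _ & _ & _ & _ & _ & Hal & Hbe & HKg & Hg & Het & _).
  assert (HA : 0 <= alpha P * (1 + beta P) * (1 + eta P) / gamma0 P)
    by (apply Rdiv_le_0_compat; [apply Rmult_le_pos; nra | lra]).
  unfold Fh, Gfun, Gam.
  assert (HG : 0 < Kg P / (Kg P + h) <= 1).
  { split; [apply Rdiv_lt_0_compat; lra |].
    apply Rmult_le_reg_r with (Kg P + h); [lra |]. field_simplify; lra. }
  assert (Hprod : alpha P * n * (1 + beta P * x) * (Kg P / (Kg P + h)) <= alpha P * (1 + beta P)).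
  { assert (0 <= beta P * x <= beta P) by (split; nra).
    assert (0 <= n * (1 + beta P * x) <= 1 + beta P) by (split; nra).
    assert (0 <= alpha P * n * (1 + beta P * x) <= alpha P * (1 + beta P)) by (split; nra).
    nra. }
  assert (Hclear : alpha P * (1 + beta P) <= gamma0 P / (1 + eta P * n) * (h - 1)).
  { assert (gamma0 P / (1 + eta P) <= gamma0 P / (1 + eta P * n)).
    { unfold Rdiv. apply Rmult_le_compat_l; [lra |]. apply Rinv_le_contravar; nra. }
    assert (alpha P * (1 + beta P)
            = gamma0 P / (1 + eta P) * (alpha P * (1 + beta P) * (1 + eta P) / gamma0 P))
      by (field; lra).
    assert (0 < gamma0 P / (1 + eta P)) by (apply Rdiv_lt_0_compat; lra).
    nra. }
  lra.
Qed.

Lemma model_points_inward a b : 0 < a <= 1 -> h_max <= b ->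
  points_inward (vec3 0 a 0) (vec3 1 b 1) (model_field P).
Proof.
  intros Ha Hb.
  pose proof HP as (_ & _ & _ & _ & Hphi & Hphi1 & _ & _ & _ & Hmu0 & _ & Hnu & _).
  intros i s Hs. pose proof (Hs cx) as Hx. pose proof (Hs ch) as Hh. pose proof (Hs cn) as Hn.
  simpl in Hx, Hh, Hn. destruct i; simpl; split; intros Hsi; rewrite Hsi.
  - unfold Fx, mu. pose proof (exp_pos (p P * ln (s ch))). unfold Rpower. nra.
  - unfold Fx. nra.
  - apply Fh_at_low_h; lra.
  - apply Fh_at_high_h; lra.
  - unfold Defs.Fn. lra.
  - unfold Defs.Fn, Dfun. pose proof (dS_nonneg (s ch)).
    assert (0 <= (1 - phi P * s cx) * dS P (s ch)) by (apply Rmult_le_pos; nra). lra.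
Qed.

Lemma model_solution_unique a b Y Z : 0 < a ->
  (forall t, 0 <= t -> box (vec3 0 a 0) (vec3 1 b 1) (state Y t)) ->
  solves (model_field P) Y -> solves (model_field P) Z -> (forall i, Z i 0 = Y i 0) ->
  forall i t, 0 <= t -> Z i t = Y i t.
Proof.
  intros Ha Hbox HY HZ H0 i t Ht.
  pose proof HP as (_ & _ & _ & _ & _ & _ & _ & _ & _ & _ & _ & _ & _ & _ & _ & _ & Heta & _).
  assert (Heta' : 0 < / (2 * eta P)) by (apply Rinv_0_lt_compat; lra).
  set (d := Rmin 1 (Rmin (a / 2) (/ (2 * eta P)))).
  assert (Hd : 0 < d /\ d <= 1 /\ d <= a / 2 /\ d <= / (2 * eta P)).
  { unfold d. pose proof (Rmin_l 1 (Rmin (a / 2) (/ (2 * eta P)))).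
    pose proof (Rmin_r 1 (Rmin (a / 2) (/ (2 * eta P)))).
    pose proof (Rmin_l (a / 2) (/ (2 * eta P))). pose proof (Rmin_r (a / 2) (/ (2 * eta P))).
    assert (0 < Rmin 1 (Rmin (a / 2) (/ (2 * eta P))))
      by (apply Rmin_pos; [lra | apply Rmin_pos; lra]).
    lra. }
  apply (solves_unique coords coords_complete
           (box (vec3 (-1) (a / 2) (- / (2 * eta P))) (vec3 2 (b + 1) 2))
           (model_field P) Y Z d t); [lra | exact Ht | | | exact HY | exact HZ | exact H0].
  - intros j. apply lip_bounded_model_field; simpl; [lra |].
    replace (1 + eta P * - / (2 * eta P)) with (/ 2) by (field; lra). lra.
  - intros u s Hu Hs j. specialize (Hs j). apply Rabs_def2 in Hs.
    destruct (Hbox u Hu j). unfold state in *. destruct j; simpl in *; lra.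
Qed.

End Model.

Theorem theorem1 (P : params) (x0 h0 n0 : R) :
  params_ok P -> inD x0 h0 n0 ->
  exists x h n : R -> R,
    is_solution P x h n /\ x 0 = x0 /\ h 0 = h0 /\ n 0 = n0 /\
    (forall t, 0 <= t -> inD (x t) (h t) (n t)) /\
    (forall x' h' n' : R -> R,
       is_solution P x' h' n' -> x' 0 = x0 -> h' 0 = h0 -> n' 0 = n0 ->
       forall t, 0 <= t -> x' t = x t /\ h' t = h t /\ n' t = n t).
Proof.
  intros HP [Hx0 [Hh0 Hn0]].
  set (a := Rmin h0 1). set (b := Rmax h0 (h_max P)).
  assert (Ha : 0 < a <= 1 /\ a <= h0)
    by (unfold a; split; [split; [apply Rmin_pos; lra | apply Rmin_r] | apply Rmin_l]).
  assert (Hb : h0 <= b /\ h_max P <= b) by (unfold b; split; [apply Rmax_l | apply Rmax_r]).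
  destruct (box_invariant_solution coords coords_complete (vec3 0 a 0) (vec3 1 b 1)
              (model_field P) (vec3 x0 h0 n0)) as [Y [HY [HY0 Hbox]]].
  - intros i. apply lip_bounded_model_field; [exact HP | simpl; lra | simpl; lra].
  - apply model_points_inward; [exact HP | lra | lra].
  - intros []; simpl; lra.
  - assert (HinD : forall t, 0 <= t -> inD (Y cx t) (Y ch t) (Y cn t)).
    { intros t Ht. pose proof (Hbox t Ht cx). pose proof (Hbox t Ht ch). pose proof (Hbox t Ht cn).
      unfold state, inD in *. simpl in *. lra. }
    exists (Y cx), (Y ch), (Y cn).
    split; [apply solves_is_solution; [exact HY | intros t Ht; apply (HinD t Ht)] |].
    split; [apply (HY0 cx) | split; [apply (HY0 ch) | split; [apply (HY0 cn) |]]].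
    split; [exact HinD |].
    intros x' h' n' Hsol' Ex Eh En t Ht.
    pose proof (model_solution_unique P HP a b Y (traj x' h' n') (proj1 (proj1 Ha)) Hbox HY
                  (is_solution_solves P x' h' n' Hsol')) as Huniq.
    assert (H0 : forall i, traj x' h' n' i 0 = Y i 0) by (intros []; rewrite HY0; assumption).
    split; [| split]; [apply (Huniq H0 cx) | apply (Huniq H0 ch) | apply (Huniq H0 cn)]; exact Ht.
Qed.
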